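(* In the setting described in the context, assume that (1) $\nu_x>0$ for every $x\in\mathcal X$ with $\alpha_x>0$; (2) $P_{\rm all}(W,x)>0$ whenever $W^x<\alpha_x$; (3) $\sum_{x\in D}\alpha_x\le\sum_{y\in N(D)}\beta_y$ for all $D\subseteq\mathcal X$, where $N(D)=\bigcup_{x\in D}N_x$. Then, from any initial partial allocation state, with probability $1$ the Markov process $W(t)$ enters the set $\mathcal W$ of allocation states after a finite number of jumps.
   Context: $\mathcal X$ is a finite set of units, $\mathcal G=(\mathcal X,\mathcal E)$ a directed graph, $N_x=\{y:(x,y)\in\mathcal E\}$, and $\alpha_x,\beta_x$ non-negative integers. A partial allocation state is a matrix $W\in\mathbb N^{\mathcal X\times\mathcal X}$ with $W_{xy}=0$ whenever $(x,y)\notin\mathcal E$, $W^x:=\sum_yW_{xy}\le\alpha_x$ and $W_y:=\sum_xW_{xy}\le\beta_y$; it is an allocation state if $W^x=\alpha_x$ for all $x$. $\mathcal W_p$ and $\mathcal W$ denote the sets of partial allocation states and allocation states; $e_{xy}$ is the matrix with $1$ in entry $(x,y)$ and $0$ elsewhere. Fix reals $\lambda_y$, parameters $k_c,k_a\ge0$, $\gamma>0$, and set $f_{xy}(W)=\lambda_y-k_cW_y/\beta_y+k_aW_{xy}$. Let $\mathcal X^x(W)=\{y\in N_x: W_y<\beta_y\}$ and define the Gibbs distribution on $\mathcal X^x(W)$ by $p_y(W,x)=e^{\gamma f_{xy}(W+e_{xy})}/\sum_{y'\in\mathcal X^x(W)}e^{\gamma f_{xy'}(W+e_{xy'})}$.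 For each unit $x$ and state $W$ let $P_{\rm all}(W,x),P_{\rm dis}(W,x)\ge0$ with $P_{\rm all}+P_{\rm dis}=1$, $P_{\rm all}(W,x)=0$ if $W^x=\alpha_x$, $P_{\rm dis}(W,x)=0$ if $W^x=0$. The process $W(t)$ on $\mathcal W_p$ is the continuous-time Markov process in which each unit $x$ activates according to an independent Poisson clock of rate $\nu_x\ge0$; when $x$ activates in state $W$: with probability $P_{\rm all}(W,x)$ it performs an allocation move, choosing $y^*\in\mathcal X^x(W)$ with probability $p_{y^*}(W,x)$ and passing to $W+e_{xy^*}$ (no action is possible if $\mathcal X^x(W)=\emptyset$); with probability $P_{\rm dis}(W,x)$ it performs a distribution move, choosing $\bar y$ with probability $W_{x\bar y}/W^x$, then $y^*\in\mathcal X^x(W-e_{x\bar y})$ with probability $p_{y^*}(W-e_{x\bar y},x)$, and passing to $W-e_{x\bar y}+e_{xy^*}$. *)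

From HB Require Import structures.
From mathcomp Require Import all_boot all_order all_algebra.
From mathcomp Require Import all_classical all_reals all_analysis.
Set Implicit Arguments. Unset Strict Implicit. Unset Printing Implicit Defensive.
Import Order.TTheory GRing.Theory Num.Theory.
Local Open Scope ring_scope.

Definition state (X : finType) := {ffun X * X -> nat}.

Section Model.
Context (R : realType) (X : finType).

Definition rowsum (W : state X) (x : X) : nat := (\sum_(y : X) W (x, y))%N.
Definition colsum (W : state X) (y : X) : nat := (\sum_(x : X) W (x, y))%N.

(* W + e_xy and W - e_xy (the latter only used when W_xy > 0) *)
Definition addE (W : state X) (x y : X) : state X :=
  [ffun p => (W p + (p == (x, y)))%N].
Definition subE (W : state X) (x y : X) : state X :=
  [ffun p => (W p - (p == (x, y)))%N].

Definition partial_state (E : rel X) (alpha beta : X -> nat) (W : state X) : bool :=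
  [&& [forall x, forall y, ~~ E x y ==> (W (x, y) == 0%N)],
      [forall x, rowsum W x <= alpha x]%N &
      [forall y, colsum W y <= beta y]%N].

Definition alloc_state (E : rel X) (alpha beta : X -> nat) (W : state X) : bool :=
  partial_state E alpha beta W && [forall x, rowsum W x == alpha x].

Context (E : rel X) (alpha beta : X -> nat) (lambda : X -> R) (kc ka gamma : R)
        (nu : X -> R) (Pall Pdis : state X -> X -> R).

Definition avail (W : state X) (x y : X) : bool := E x y && (colsum W y < beta y)%N.

Definition fxy (W : state X) (x y : X) : R :=
  lambda y - kc * (colsum W y)%:R / (beta y)%:R + ka * (W (x, y))%:R.

Definition gibbs (W : state X) (x y : X) : R :=
  if avail W x y then
    expR (gamma * fxy (addE W x y) x y) /
    \sum_(y' | avail W x y') expR (gamma * fxy (addE W x y') x y')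
  else 0.

(* Given h : state -> R, [jump W h] = sum over W' <> W of q(W, W') h(W'),
   where q(W, W') is the transition rate of the process from W to W'. *)
Definition jump (W : state X) (h : state X -> R) : R :=
  \sum_(x : X) nu x *
    (Pall W x *
       (\sum_(y | avail W x y)
          gibbs W x y * (if addE W x y != W then h (addE W x y) else 0))
     + Pdis W x *
       (\sum_(yb : X) ((W (x, yb))%:R / (rowsum W x)%:R) *
          \sum_(y | avail (subE W x yb) x y)
            gibbs (subE W x yb) x y *
            (if addE (subE W x yb) x y != W then h (addE (subE W x yb) x y)
             else 0))).

Definition qtot (W : state X) : R := jump W (fun _ => 1).

(* hitprob n W = probability that the jump chain of W(t), started at W,
   is in the set of allocation states after at most n jumps
   (first-step analysis; an absorbing state, qtot = 0, never jumps again). *)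
Fixpoint hitprob (n : nat) (W : state X) : R :=
  if alloc_state E alpha beta W then 1
  else match n with
       | 0%N => 0
       | n'.+1 => if qtot W == 0 then 0 else jump W (hitprob n') / qtot W
       end.

End Model.

Definition neighb (X : finType) (E : rel X) (D : {set X}) : {set X} :=
  [set y | [exists x in D, E x y]].

From HB Require Import structures.
From mathcomp Require Import all_boot all_order all_algebra.
From mathcomp Require Import all_classical all_reals all_analysis.
From mathcomp Require Import lra zify.
Set Implicit Arguments.
Unset Strict Implicit.
Unset Printing Implicit Defensive.
Import Order.TTheory GRing.Theory Num.Theory numFieldNormedType.Exports.
Local Open Scope ring_scope.

(* Failure probabilities are submultiplicative: by the Markov property,
   1 - hitprob (n + m) W <= (1 - hitprob m W) * sup_s (1 - hitprob n s).
   The entries of a partial state are bounded by max alpha, so there are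
   finitely many partial states, and it suffices that each of them reaches an
   allocation state with positive probability; the failure then decays
   geometrically.

   Positivity is an augmenting path argument. If W is not an allocation state,
   Hall's condition (3), applied to the units joined by alternating paths
   (an edge, then an allocated pair, then an edge, ...) to a unit with
   W^x < alpha_x, shows that such a path ends at a y with W_y < beta_y.
   Shifting allocated units along the path by distribution moves and closing
   it with an allocation move lowers the deficit sum_x (alpha_x - W^x), and
   each of these moves has positive rate by (1), (2), P_all + P_dis = 1 and
   the positivity of the Gibbs weights. *)

Section Moves.
Variable X : finType.
Implicit Types (W : state X) (x y : X).

Lemma rowsum_addE W x y x' : rowsum (addE W x y) x' = (rowsum W x' + (x' == x))%N.
Proof.
rewrite /rowsum; under eq_bigr => z _ do rewrite ffunE.
rewrite big_split /=; congr (_ + _)%N.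
rewrite (bigD1 y) //= big1 => [|z /negbTE zy]; last by rewrite xpair_eqE zy andbF.
by rewrite xpair_eqE eqxx andbT addn0.
Qed.

Lemma colsum_addE W x y y' : colsum (addE W x y) y' = (colsum W y' + (y' == y))%N.
Proof.
rewrite /colsum; under eq_bigr => z _ do rewrite ffunE.
rewrite big_split /=; congr (_ + _)%N.
rewrite (bigD1 x) //= big1 => [|z /negbTE zx]; last by rewrite xpair_eqE zx.
by rewrite xpair_eqE eqxx addn0.
Qed.

Lemma subEK W x y : (0 < W (x, y))%N -> addE (subE W x y) x y = W.
Proof.
move=> Wxy; apply/ffunP => p; rewrite !ffunE.
by case: eqP => [->|_]; rewrite ?subnK ?subn0 ?addn0.
Qed.

Lemma addE_neq W x y : addE W x y != W.
Proof. by apply/eqP => /ffunP /(_ (x, y)) /eqP; rewrite ffunE eqxx addn1 gtn_eqF. Qed.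

Lemma subE_le W x y p : (subE W x y p <= W p)%N.
Proof. by rewrite ffunE leq_subr. Qed.

Lemma colsum_subE_le W x y y' : (colsum (subE W x y) y' <= colsum W y')%N.
Proof. by apply: leq_sum => z _; apply: subE_le. Qed.

Lemma rowsum_move W x y' y x' : (0 < W (x, y'))%N ->
  rowsum (addE (subE W x y') x y) x' = rowsum W x'.
Proof. by move=> Wxy'; rewrite rowsum_addE -{2}(subEK Wxy') rowsum_addE. Qed.

Lemma colsum_move_src W x y' y : (0 < W (x, y'))%N -> y != y' ->
  (colsum (addE (subE W x y') x y) y').+1 = colsum W y'.
Proof.
move=> Wxy' yy'; rewrite colsum_addE eq_sym (negbTE yy') addn0.
by rewrite -{2}(subEK Wxy') colsum_addE eqxx addn1.
Qed.

Lemma entry_le_rowsum W x y : (W (x, y) <= rowsum W x)%N.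
Proof. by rewrite /rowsum (bigD1 y) //= leq_addr. Qed.

Variables (E : rel X) (alpha beta : X -> nat).
Local Notation partial := (partial_state E alpha beta).
Local Notation alloc := (alloc_state E alpha beta).

Lemma partial_rowsum W x : partial W -> (rowsum W x <= alpha x)%N.
Proof. by case/and3P => _ /forallP. Qed.

Lemma partial_colsum W y : partial W -> (colsum W y <= beta y)%N.
Proof. by case/and3P => _ _ /forallP. Qed.

Lemma alloc_stateN W x : (rowsum W x < alpha x)%N -> ~~ alloc W.
Proof.
by move=> Wx; apply/negP => /andP [_ /forallP /(_ x) /eqP full]; rewrite full ltnn in Wx.
Qed.

Lemma partial_le W W' : (forall p, W' p <= W p)%N -> partial W -> partial W'.
Proof.
move=> le_W'W /and3P [/forallP supp /forallP row /forallP col]; apply/and3P; split.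
- apply/forallP => a; apply/forallP => b; apply/implyP => nab.
  move: (le_W'W (a, b)); move/forallP/(_ b)/implyP/(_ nab)/eqP: (supp a) => ->.
  by rewrite leqn0.
- by apply/forallP => a; apply: leq_trans (row a); apply: leq_sum => b _.
- by apply/forallP => b; apply: leq_trans (col b); apply: leq_sum => a _.
Qed.

Lemma partial_addE W x y : partial W -> E x y ->
  (colsum W y < beta y)%N -> (rowsum W x < alpha x)%N -> partial (addE W x y).
Proof.
case/and3P => /forallP supp /forallP row /forallP col exy Wy Wx; apply/and3P; split.
- apply/forallP => a; apply/forallP => b; apply/implyP => nab; rewrite ffunE.
  move/forallP/(_ b)/implyP/(_ nab)/eqP: (supp a) => ->.
  by case: ((a, b) =P (x, y)) => // [[ax bx]]; rewrite ax bx exy in nab.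
- apply/forallP => a; rewrite rowsum_addE.
  by case: eqP => [->|_]; rewrite ?addn1 ?addn0.
- apply/forallP => b; rewrite colsum_addE.
  by case: eqP => [->|_]; rewrite ?addn1 ?addn0.
Qed.

Lemma partial_move W x y' y : partial W -> (0 < W (x, y'))%N -> E x y ->
  (colsum (subE W x y') y < beta y)%N -> partial (addE (subE W x y') x y).
Proof.
move=> pW Wxy' exy Wy; apply: partial_addE => //; first exact: partial_le (subE_le W x y') pW.
by have := partial_rowsum x pW; rewrite -{1}(subEK Wxy') rowsum_addE eqxx addn1.
Qed.

Definition deficit W := (\sum_x (alpha x - rowsum W x))%N.

Lemma deficit_addE W x y : (rowsum W x < alpha x)%N ->
  deficit W = (deficit (addE W x y)).+1.
Proof.
move=> Wx; rewrite /deficit (bigD1 x) //= [in RHS](bigD1 x) //= rowsum_addE eqxx.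
under [in RHS]eq_bigr => a /negbTE ax do rewrite rowsum_addE ax addn0.
lia.
Qed.

Lemma deficit_move W x y' y : (0 < W (x, y'))%N ->
  deficit (addE (subE W x y') x y) = deficit W.
Proof. by move=> Wxy'; apply: eq_bigr => a _; rewrite rowsum_move. Qed.

End Moves.

Section AugmentingPaths.
Variables (X : finType) (E : rel X) (alpha beta : X -> nat).
Implicit Types (W : state X) (x z : X).
Local Notation partial := (partial_state E alpha beta).
Local Notation alloc := (alloc_state E alpha beta).

Fixpoint reachable W k z : Prop :=
  if k is k'.+1 then
    reachable W k' z \/ exists x z', [/\ reachable W k' z', (0 < W (x, z'))%N & E x z]
  else exists x, (rowsum W x < alpha x)%N /\ E x z.

Lemma reachable_move W x z' z : (0 < W (x, z'))%N -> forall k z1, reachable W k z1 ->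
  reachable (addE (subE W x z') x z) k z1 \/ exists2 i, (i < k)%N & reachable W i z'.
Proof.
move=> Wxz'; elim=> [|k IH] z1 /=.
  by case=> a [Wa eaz1]; left; exists a; rewrite rowsum_move.
case=> [/IH [rz1|[i ik ri]]|[a [z2 [rz2 Waz2 eaz1]]]]; first by left; left.
  by right; exists i => //; apply: ltnW.
case: (IH z2 rz2) => [rz2'|[i ik ri]]; last by right; exists i => //; apply: ltnW.
case: ((a, z2) =P (x, z')) => [[_ <-]|neq]; first by right; exists k.
left; right; exists a, z2; split => //.
by rewrite !ffunE (introF eqP neq) subn0 addn_gt0 Waz2.
Qed.

Section Hall.
Variables (W : state X) (pW : partial W).
Hypothesis full : forall k z, reachable W k z -> (beta z <= colsum W z)%N.

Let Y := [set z | `[< exists k, reachable W k z >]].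
Let D := [set x | (rowsum W x < alpha x)%N || [exists z in Y, (0 < W (x, z))%N]].

Let inYP z : reflect (exists k, reachable W k z) (z \in Y).
Proof. by rewrite inE; apply: asboolP. Qed.

Let neighb_D : neighb E D \subset Y.
Proof.
apply/fintype.subsetP => z; rewrite inE => /existsP [x /andP [+ exz]]; rewrite inE.
case/orP => [Wx|/existsP [z1 /andP [/inYP [k rz1] Wxz1]]]; apply/inYP.
  by exists 0%N, x.
by exists k.+1; right; exists x, z1.
Qed.

Let sum_beta_Y : (\sum_(z in Y) beta z <= \sum_(x in D) rowsum W x)%N.
Proof.
apply: (@leq_trans (\sum_(z in Y) colsum W z)).
  by apply: leq_sum => z /inYP [k rz]; apply: full rz.
rewrite /colsum exchange_big /= [X in (_ <= X)%N]big_mkcond; apply: leq_sum => x _.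
case: ifP => Dx; first by rewrite /rowsum [X in (_ <= X)%N](bigID [in Y]) leq_addr.
rewrite big1 // => z Yz; apply/eqP; rewrite -leqn0 leqNgt; apply: contraFN Dx => Wxz.
by rewrite inE; apply/orP; right; apply/existsP; exists z; rewrite Yz.
Qed.

Lemma hall_counterexample : ~~ alloc W ->
  exists D : {set X}, (\sum_(y in neighb E D) beta y < \sum_(x in D) alpha x)%N.
Proof.
rewrite /alloc_state pW negb_forall => /existsP [x0 Wx0].
have {}Wx0 : (rowsum W x0 < alpha x0)%N by rewrite ltn_neqAle Wx0 (partial_rowsum _ pW).
exists D; apply: (@leq_ltn_trans (\sum_(z in Y) beta z)).
  rewrite [X in (X <= _)%N]big_mkcond [X in (_ <= X)%N]big_mkcond.
  by apply: leq_sum => z _; case: ifP => // /(fintype.subsetP neighb_D) ->.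
apply: leq_ltn_trans sum_beta_Y _.
have Dx0 : x0 \in D by rewrite inE Wx0.
rewrite (bigD1 x0) // [X in (_ < X)%N](bigD1 x0) //= -addSn leq_add //.
by apply: leq_sum => x _; apply: partial_rowsum pW.
Qed.

End Hall.

Lemma reachable_free W : partial W -> ~~ alloc W ->
  (forall D : {set X}, \sum_(x in D) alpha x <= \sum_(y in neighb E D) beta y)%N ->
  exists k z, reachable W k z /\ (colsum W z < beta z)%N.
Proof.
move=> pW nW hall; apply: contrapT => nofree.
have full k z : reachable W k z -> (beta z <= colsum W z)%N.
  by move=> rz; rewrite leqNgt; apply/negP => Wz; apply: nofree; exists k, z.
have [D] := hall_counterexample pW full nW.
by rewrite ltnNge hall.
Qed.

End AugmentingPaths.

Section LinearFunctionals.
Variables (R : comPzRingType) (T : Type).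
Implicit Types (phi psi : (T -> R) -> R) (a b c d : R).

Definition lin_fun phi :=
  forall f g a b, phi (fun t => a * f t + b * g t) = a * phi f + b * phi g.

Lemma lin_fun_eval (cond : bool) t : lin_fun (fun h => if cond then h t else 0).
Proof. by move=> f g a b; case: cond; rewrite ?mulr0 ?addr0. Qed.

Lemma lin_fun_add phi psi c d : lin_fun phi -> lin_fun psi ->
  lin_fun (fun h => c * phi h + d * psi h).
Proof.
move=> lphi lpsi f g a b; rewrite lphi lpsi.
by rewrite !mulrDr !(mulrCA c) !(mulrCA d) addrACA.
Qed.

Lemma lin_fun_sum (I : finType) (P : pred I) (c : I -> R) (phi : I -> (T -> R) -> R) :
  (forall i, lin_fun (phi i)) -> lin_fun (fun h => \sum_(i | P i) c i * phi i h).
Proof.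
move=> lphi f g a b.
under eq_bigr => i _ do rewrite lphi mulrDr (mulrCA (c i) a) (mulrCA (c i) b).
by rewrite big_split /= -!mulr_sumr.
Qed.

End LinearFunctionals.

Lemma ler_sum_term (R : numDomainType) (I : finType) (P : pred I) (F : I -> R) i :
  P i -> (forall j, P j -> 0 <= F j) -> F i <= \sum_(j | P j) F j.
Proof. by move=> Pi F0; rewrite (bigD1 i) //= lerDl sumr_ge0 // => j /andP [/F0]. Qed.

Section JumpChain.
Variables (R : realType) (X : finType) (E : rel X) (alpha beta : X -> nat)
  (lambda : X -> R) (kc ka gamma : R) (nu : X -> R) (Pall Pdis : state X -> X -> R).
Implicit Types (W : state X) (x y : X) (h : state X -> R).

Local Notation partial := (partial_state E alpha beta).
Local Notation alloc := (alloc_state E alpha beta).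
Local Notation avail := (avail E beta).
Local Notation gibbs := (gibbs E beta lambda kc ka gamma).
Local Notation jump := (jump E beta lambda kc ka gamma nu Pall Pdis).
Local Notation qtot := (qtot E beta lambda kc ka gamma nu Pall Pdis).
Local Notation hitprob := (hitprob E alpha beta lambda kc ka gamma nu Pall Pdis).

Hypotheses (nu_ge0 : forall x, 0 <= nu x)
  (Pall_ge0 : forall W x, partial W -> 0 <= Pall W x)
  (Pdis_ge0 : forall W x, partial W -> 0 <= Pdis W x)
  (Pall_full : forall W x, partial W -> rowsum W x = alpha x -> Pall W x = 0)
  (Pall_Pdis : forall W x, partial W -> Pall W x + Pdis W x = 1)
  (nu_gt0 : forall x, (0 < alpha x)%N -> 0 < nu x)
  (Pall_gt0 : forall W x, partial W -> (rowsum W x < alpha x)%N -> 0 < Pall W x)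
  (hall : forall D : {set X},
     (\sum_(x in D) alpha x <= \sum_(y in neighb E D) beta y)%N).

Lemma gibbs_ge0 W x y : 0 <= gibbs W x y.
Proof.
rewrite /gibbs; case: ifP => // _.
by rewrite divr_ge0 ?sumr_ge0 // => *; apply/ltW/expR_gt0.
Qed.

Lemma gibbs_gt0 W x y : avail W x y -> 0 < gibbs W x y.
Proof.
move=> Wxy; rewrite /gibbs Wxy divr_gt0 ?expR_gt0 // (bigD1 y) //=.
by rewrite ltr_pwDl ?expR_gt0 ?sumr_ge0 // => *; apply/ltW/expR_gt0.
Qed.

Lemma jump_lin W : lin_fun (jump W).
Proof.
apply: lin_fun_sum => x; apply: lin_fun_add; apply: lin_fun_sum => i.
  exact: lin_fun_eval.
by apply: lin_fun_sum => y; apply: lin_fun_eval.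
Qed.

Definition alloc_mean W x h := \sum_(y | avail W x y)
  gibbs W x y * (if addE W x y != W then h (addE W x y) else 0).

Definition move_mean W x yb h := \sum_(y | avail (subE W x yb) x y)
  gibbs (subE W x yb) x y *
  (if addE (subE W x yb) x y != W then h (addE (subE W x yb) x y) else 0).

Definition dist_mean W x h :=
  \sum_yb (W (x, yb))%:R / (rowsum W x)%:R * move_mean W x yb h.

Lemma jumpE W h :
  jump W h = \sum_x nu x * (Pall W x * alloc_mean W x h + Pdis W x * dist_mean W x h).
Proof. by []. Qed.

Section NonnegativeJump.
Variable h : state X -> R.
Hypothesis h_ge0 : forall s, partial s -> 0 <= h s.

Let summand_ge0 W' x y s (cond : bool) : partial s ->
  0 <= gibbs W' x y * (if cond then h s else 0).
Proof. by move=> ps; rewrite mulr_ge0 ?gibbs_ge0 //; case: cond => //; apply: h_ge0. Qed.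

Lemma alloc_term_ge0 W x : partial W -> 0 <= Pall W x * alloc_mean W x h.
Proof.
move=> pW; have [Wx|] := ltnP (rowsum W x) (alpha x); last first.
  move=> Wx; rewrite Pall_full ?mul0r //.
  by apply/eqP; rewrite eqn_leq Wx (partial_rowsum _ pW).
rewrite mulr_ge0 ?Pall_ge0 ?sumr_ge0 // => y /andP [exy Wy].
exact/summand_ge0/partial_addE.
Qed.

Let dist_summand_ge0 W x yb : partial W ->
  0 <= (W (x, yb))%:R / (rowsum W x)%:R * move_mean W x yb h.
Proof.
move=> pW; have [->|Wxyb] := posnP (W (x, yb)); first by rewrite !mul0r.
rewrite mulr_ge0 ?divr_ge0 ?sumr_ge0 // => y /andP [exy Wy].
exact/summand_ge0/partial_move.
Qed.

Lemma dist_term_ge0 W x : partial W -> 0 <= Pdis W x * dist_mean W x h.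
Proof.
by move=> pW; rewrite mulr_ge0 ?Pdis_ge0 ?sumr_ge0 // => yb _; apply: dist_summand_ge0.
Qed.

Lemma jump_ge_unit W x : partial W ->
  nu x * (Pall W x * alloc_mean W x h + Pdis W x * dist_mean W x h) <= jump W h.
Proof.
move=> pW; rewrite jumpE; apply: (ler_sum_term (P := xpredT)) => // x' _.
by rewrite mulr_ge0 ?addr_ge0 ?alloc_term_ge0 ?dist_term_ge0.
Qed.

Lemma jump_ge0 W : partial W -> 0 <= jump W h.
Proof.
move=> pW; rewrite jumpE sumr_ge0 // => x _.
by rewrite mulr_ge0 ?addr_ge0 ?alloc_term_ge0 ?dist_term_ge0.
Qed.

Lemma jump_ge_alloc W x y : partial W -> avail W x y -> (rowsum W x < alpha x)%N ->
  nu x * (Pall W x * (gibbs W x y * h (addE W x y))) <= jump W h.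
Proof.
move=> pW Wxy Wx; apply: le_trans (jump_ge_unit x pW).
rewrite ler_wpM2l // -[X in X <= _]addr0 lerD ?dist_term_ge0 // ler_wpM2l ?Pall_ge0 //.
rewrite /alloc_mean; apply: le_trans (ler_sum_term Wxy _); first by rewrite addE_neq.
by move=> y' /andP [exy' Wy']; apply/summand_ge0/partial_addE.
Qed.

Lemma jump_ge_move W x yb y : partial W -> (0 < W (x, yb))%N ->
  avail (subE W x yb) x y -> addE (subE W x yb) x y != W ->
  nu x * (Pdis W x * ((W (x, yb))%:R / (rowsum W x)%:R *
    (gibbs (subE W x yb) x y * h (addE (subE W x yb) x y)))) <= jump W h.
Proof.
move=> pW Wxyb Wy moved; apply: le_trans (jump_ge_unit x pW).
rewrite ler_wpM2l // -[X in X <= _]add0r lerD ?alloc_term_ge0 // ler_wpM2l ?Pdis_ge0 //.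
rewrite /dist_mean.
apply: le_trans (ler_sum_term (P := xpredT) (i := yb) _ _) => //; last first.
  by move=> yb' _; apply: dist_summand_ge0.
rewrite ler_wpM2l ?divr_ge0 //.
rewrite /move_mean; apply: le_trans (ler_sum_term Wy _); first by rewrite moved.
by move=> y' /andP [exy' Wy']; apply/summand_ge0/partial_move.
Qed.

End NonnegativeJump.

Lemma jump_mono W h h' : partial W -> (forall s, partial s -> h s <= h' s) ->
  jump W h <= jump W h'.
Proof.
move=> pW le_hh'; rewrite -subr_ge0 -[jump W h']mul1r -mulN1r -jump_lin.
by apply: jump_ge0 => // s ps; rewrite mul1r mulN1r subr_ge0 le_hh'.
Qed.

Lemma qtot_ge0 W : partial W -> 0 <= qtot W.
Proof. by move=> pW; apply: jump_ge0. Qed.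

Lemma hitprob_alloc n W : alloc W -> hitprob n W = 1.
Proof. by case: n => [|n] /= ->. Qed.

Lemma hitprob_stuck n W : ~~ alloc W -> qtot W = 0 -> hitprob n W = 0.
Proof. by move=> /negbTE nW q0; case: n => [|n] /=; rewrite nW // q0 eqxx. Qed.

Lemma hitprob_bounds n W : partial W -> 0 <= hitprob n W <= 1.
Proof.
elim: n W => [|n IH] W pW /=; case: ifP => _; rewrite ?lexx ?ler01 //.
case: eqP => [_|/eqP q_neq0]; first by rewrite lexx ler01.
have q_gt0 : 0 < qtot W by rewrite lt_def q_neq0 qtot_ge0.
apply/andP; split; first by rewrite divr_ge0 ?(ltW q_gt0) ?jump_ge0 // => s /IH /andP [].
by rewrite ler_pdivrMr // mul1r; apply: jump_mono => // s /IH /andP [].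
Qed.

Lemma hitprob_ge0 n W : partial W -> 0 <= hitprob n W.
Proof. by case/(hitprob_bounds n)/andP. Qed.

Lemma hitprob_fail_addn n m W e : (forall s, partial s -> 1 - hitprob n s <= e) ->
  0 <= e -> partial W -> 1 - hitprob (n + m) W <= (1 - hitprob m W) * e.
Proof.
move=> fail_n e_ge0; elim: m W => [|m IH] W pW.
  rewrite addn0 /=; case: ifP => nW; last by rewrite subr0 mul1r fail_n.
  by rewrite hitprob_alloc // subrr mul0r.
rewrite addnS /=; case: ifP => nW; first by rewrite subrr mul0r.
case: eqP => [q0|/eqP q_neq0].
  by have := fail_n W pW; rewrite hitprob_stuck ?nW // !subr0 mul1r.
have q_gt0 : 0 < qtot W by rewrite lt_def q_neq0 qtot_ge0.
have key : (1 - e) + e * (jump W (hitprob m) / qtot W) <= jump W (hitprob (n + m)) / qtot W.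
  rewrite ler_pdivlMr // mulrDl -mulrA divfK // /qtot -jump_lin.
  by apply: jump_mono => // s ps; have := IH s ps; lra.
rewrite mulrBl mul1r (mulrC _ e); lra.
Qed.

Lemma hitprob_mono n m W : partial W -> hitprob m W <= hitprob (n + m) W.
Proof.
move=> pW; have fail_n s : partial s -> 1 - hitprob n s <= 1.
  by move=> ps; rewrite lerBlDr lerDl hitprob_ge0.
by have := @hitprob_fail_addn n m W 1 fail_n ler01 pW; rewrite mulr1; lra.
Qed.

Lemma hitprob_gt0_jump n W : partial W -> ~~ alloc W ->
  0 < jump W (hitprob n) -> 0 < hitprob n.+1 W.
Proof.
move=> pW /negbTE nW jump_gt0; rewrite /= nW.
have q_gt0 : 0 < qtot W.
  apply: lt_le_trans jump_gt0 (jump_mono pW _) => s ps.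
  by case/andP: (hitprob_bounds n ps).
by rewrite gt_eqF // divr_gt0.
Qed.

Definition may_hit W := exists n, 0 < hitprob n W.

Lemma may_hit_alloc_move W x y : partial W -> (rowsum W x < alpha x)%N -> E x y ->
  (colsum W y < beta y)%N -> may_hit (addE W x y) -> may_hit W.
Proof.
move=> pW Wx exy Wy [n hit]; exists n.+1.
apply: (hitprob_gt0_jump pW (alloc_stateN _ _ Wx)).
have Wxy : avail W x y by rewrite /avail exy.
apply: lt_le_trans (jump_ge_alloc (hitprob_ge0 n) pW Wxy Wx).
by rewrite !mulr_gt0 ?nu_gt0 ?Pall_gt0 ?gibbs_gt0 // (leq_ltn_trans _ Wx).
Qed.

Lemma may_hit_dist_move W x yb y : partial W -> ~~ alloc W ->
  (0 < W (x, yb))%N -> rowsum W x = alpha x -> E x y -> (colsum W y < beta y)%N ->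
  y != yb -> may_hit (addE (subE W x yb) x y) -> may_hit W.
Proof.
move=> pW nW Wxyb Wx exy Wy y_yb [n hit]; exists n.+1.
apply: (hitprob_gt0_jump pW nW).
have Wy' : avail (subE W x yb) x y.
  by rewrite /avail exy (leq_ltn_trans (colsum_subE_le _ _ _ _)).
have moved : addE (subE W x yb) x y != W.
  by apply/eqP => W'W; have := colsum_move_src Wxyb y_yb; rewrite W'W => /esym /n_Sn.
apply: lt_le_trans (jump_ge_move (hitprob_ge0 n) pW Wxyb Wy' moved).
have Wx_gt0 : (0 < rowsum W x)%N := leq_trans Wxyb (entry_le_rowsum W x yb).
have nu_x : 0 < nu x by rewrite nu_gt0 // -Wx.
have -> : Pdis W x = 1 by rewrite -(Pall_Pdis x pW) Pall_full // add0r.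
by rewrite mul1r !mulr_gt0 ?invr_gt0 ?ltr0n ?gibbs_gt0.
Qed.

Lemma may_hit_reachable d : (forall W, partial W -> (deficit alpha W < d)%N -> may_hit W) ->
  forall k W z, partial W -> deficit alpha W = d -> reachable E alpha W k z ->
  (colsum W z < beta z)%N -> may_hit W.
Proof.
move=> hit_lt; elim/ltn_ind => k IH W z pW dW rz Wz.
have [aW|nW] := boolP (alloc W); first by exists 0%N; rewrite /= aW ltr01.
have alloc_move x : (rowsum W x < alpha x)%N -> E x z -> may_hit W.
  move=> Wx exz; apply: (may_hit_alloc_move pW Wx exz Wz).
  apply: hit_lt; first exact: partial_addE.
  by rewrite -dW (deficit_addE z Wx).
case: k IH rz => [|k] IH /=; first by case=> x []; apply: alloc_move.
case=> [|[x [z' [rz' Wxz' exz]]]]; first by move/IH; apply.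
have [Wz'|Wz'] := ltnP (colsum W z') (beta z'); first exact: IH rz' Wz'.
have [Wx|Wx] := ltnP (rowsum W x) (alpha x); first exact: alloc_move Wx exz.
have {}Wx : rowsum W x = alpha x by apply/eqP; rewrite eqn_leq Wx (partial_rowsum _ pW).
have z_z' : z != z' by apply: contraTneq Wz => ->; rewrite -leqNgt.
have [rz'_moved|[i ik rz'_i]] := reachable_move z Wxz' rz'; last first.
  by apply: (IH i.+1 _ W z) => //; right; exists x, z'.
apply: (may_hit_dist_move pW nW Wxz' Wx exz Wz z_z').
apply: (IH k (ltnSn k) _ z' _ _ rz'_moved).
- by apply: partial_move; rewrite ?(leq_ltn_trans (colsum_subE_le _ _ _ _) Wz).
- by rewrite deficit_move.
by have := partial_colsum z' pW; rewrite -(colsum_move_src Wxz' z_z').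
Qed.

Lemma may_hit_partial W : partial W -> may_hit W.
Proof.
move: {2}(deficit alpha W) (erefl (deficit alpha W)) => d.
elim/ltn_ind: d W => d IH W dW pW.
have [aW|nW] := boolP (alloc W); first by exists 0%N; rewrite /= aW ltr01.
have [k [z [rz Wz]]] := reachable_free pW nW hall.
by apply: (may_hit_reachable _ pW dW rz Wz) => W' pW' dW'; apply: IH dW' W' erefl pW'.
Qed.

Local Notation bstate := {ffun X * X -> 'I_(\max_x alpha x).+1}.

Definition bounded_state (t : bstate) : state X := [ffun p => t p : nat].

Lemma partial_bounded W : partial W -> exists t, bounded_state t = W.
Proof.
move=> pW; exists [ffun p => inord (W p)]; apply/ffunP => -[x y]; rewrite !ffunE inordK //.
rewrite ltnS (leq_trans (entry_le_rowsum W x y)) // (leq_trans (partial_rowsum x pW)) //.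
exact: leq_bigmax.
Qed.

Lemma hitprob_unif_gt0 : exists N, forall W, partial W -> 0 < hitprob N W.
Proof.
have /choice [N hitN] : forall t : bstate,
    exists n, partial (bounded_state t) -> 0 < hitprob n (bounded_state t).
  move=> t; have [pt|] := boolP (partial (bounded_state t)); last by exists 0%N.
  by have [n hit] := may_hit_partial pt; exists n.
exists (\max_t N t)%N => W pW; have [t tW] := partial_bounded pW; subst W.
by rewrite -(subnK (leq_bigmax t)); apply: lt_le_trans (hitprob_mono _ _ pW); apply: hitN.
Qed.

Definition fail_max n :=
  \big[Num.max/0]_(t : bstate | partial (bounded_state t)) (1 - hitprob n (bounded_state t)).

Lemma fail_max_ge n W : partial W -> 1 - hitprob n W <= fail_max n.
Proof.
move=> pW; have [t tW] := partial_bounded pW; subst W.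
exact: le_bigmax_cond.
Qed.

Lemma fail_max_ge0 n : 0 <= fail_max n.
Proof. by apply/bigmax_geP; left. Qed.

Lemma fail_max_le1 n : fail_max n <= 1.
Proof. by apply: bigmax_le => // t pt; have := hitprob_ge0 n pt; lra. Qed.

Lemma fail_max_lt1 N : (forall W, partial W -> 0 < hitprob N W) -> fail_max N < 1.
Proof. by move=> hitN; apply: bigmax_lt => // t pt; have := hitN _ pt; lra. Qed.

Lemma fail_max_addn n m : fail_max (n + m) <= fail_max m * fail_max n.
Proof.
apply: bigmax_le => [|t pt]; first by rewrite mulr_ge0 ?fail_max_ge0.
apply: le_trans (@hitprob_fail_addn n m _ _ (@fail_max_ge n) (fail_max_ge0 n) pt) _.
by rewrite ler_wpM2r ?fail_max_ge0 ?fail_max_ge.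
Qed.

Lemma fail_max_mul k N : fail_max (k * N) <= fail_max N ^+ k.
Proof.
elim: k => [|k IH]; first by rewrite mul0n expr0 fail_max_le1.
rewrite mulSn exprSr; apply: le_trans (fail_max_addn N (k * N)) _.
by rewrite ler_wpM2r ?fail_max_ge0.
Qed.

Local Open Scope classical_set_scope.
Local Open Scope ring_scope.

Lemma hitprob_cvg1 W : partial W -> hitprob n W @[n --> \oo] --> (1 : R).
Proof.
move=> pW; have [N hitN] := hitprob_unif_gt0.
have q_ge0 := fail_max_ge0 N; have q_lt1 := fail_max_lt1 hitN.
have q_norm : `|fail_max N| < 1 by rewrite ger0_norm.
apply/cvgrPdist_lt => eps eps_gt0.
have [k _ /(_ k (leqnn k))] := (cvgrPdist_lt _ _).1 (cvg_geometric 1 q_norm) eps eps_gt0.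
rewrite /= sub0r normrN mul1r ger0_norm ?exprn_ge0 // => qk_lt.
exists (k * N)%N => // n /= kN_n.
have fail_n : 1 - hitprob n W <= fail_max N ^+ k.
  apply: le_trans (fail_max_mul k N); apply: le_trans (fail_max_ge _ pW).
  by rewrite lerD2l lerN2 -(subnK kN_n) hitprob_mono.
have /andP [hit_ge0 hit_le1] := hitprob_bounds n pW; rewrite ger0_norm; lra.
Qed.

End JumpChain.

Local Open Scope classical_set_scope.
Local Open Scope ring_scope.

Theorem theorem2 (R : realType) (X : finType) (E : rel X) (alpha beta : X -> nat)
  (lambda : X -> R) (kc ka gamma : R) (nu : X -> R) (Pall Pdis : state X -> X -> R)
  (hkc : 0 <= kc) (hka : 0 <= ka) (hgamma : 0 < gamma)
  (hnu : forall x, 0 <= nu x)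
  (hPall0 : forall W x, partial_state E alpha beta W -> 0 <= Pall W x)
  (hPdis0 : forall W x, partial_state E alpha beta W -> 0 <= Pdis W x)
  (hPsum : forall W x, partial_state E alpha beta W -> Pall W x + Pdis W x = 1)
  (hPallfull : forall W x, partial_state E alpha beta W ->
     rowsum W x = alpha x -> Pall W x = 0)
  (hPdisempty : forall W x, partial_state E alpha beta W ->
     rowsum W x = 0%N -> Pdis W x = 0)
  (H1 : forall x, (0 < alpha x)%N -> 0 < nu x)
  (H2 : forall W x, partial_state E alpha beta W ->
     (rowsum W x < alpha x)%N -> 0 < Pall W x)
  (H3 : forall D : {set X},
     (\sum_(x in D) alpha x <= \sum_(y in neighb E D) beta y)%N)
  (W0 : state X) (hW0 : partial_state E alpha beta W0) :
  hitprob E alpha beta lambda kc ka gamma nu Pall Pdis n W0 @[n --> \oo] --> (1 : R).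
Proof.
(* The Gibbs weights are positive whatever the parameters. *)
exact: hitprob_cvg1.
Qed.
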